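(* Let $R$ be a commutative ring with identity and $S$ a multiplicatively closed subset of $R$. Let $L=Id(R)$ be the multiplicative lattice of all ideals of $R$, and $S_L=\{(a)\in L\mid a\in S\}$. Then an ideal $Q$ of $R$ is an $S$-primary ideal of $R$ if and only if $Q$, viewed as an element of $L$, is an $S_L$-primary element of $L$.
   Context: A proper ideal $Q$ of $R$ is $S$-primary if $S\cap Q=\varnothing$ and there exists $s\in S$ such that for all $a,b\in R$, $ab\in Q$ implies $sa\in Q$ or $sb\in\sqrt Q$ (the usual radical). In a multiplicative lattice $L$ with set $L_*$ of compact elements, the radical is $\sqrt a=\bigvee\{x\in L_*\mid x^n\le a\text{ for some }n\in\mathbb{Z}^+\}$; for a subset $T$ of compact elements, a proper element $q$ with $t\not\le q$ for all $t\in T$ is $T$-primary if there exists $t\in T$ such that for all $c,d\in L$, $cd\le q$ implies $tc\le q$ or $td\le\sqrt q$. In $Id(R)$ the order is inclusion and the multiplication is the product of ideals. *)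

(* Ideals of a commutative ring R are represented as
   predicates R -> Prop satisfying [is_ideal]; the multiplicative lattice
   L = Id(R) is the collection of such predicates, ordered by inclusion,
   with multiplication the ideal product. *)
From mathcomp Require Import all_boot all_algebra.
Set Implicit Arguments. Unset Strict Implicit. Unset Printing Implicit Defensive.
Import GRing.Theory.
Local Open Scope ring_scope.

Section IdealLattice.
Variable R : comPzRingType.

Definition subI (A B : R -> Prop) : Prop := forall x, A x -> B x.

Definition is_ideal (I : R -> Prop) : Prop :=
  [/\ I 0, (forall x y, I x -> I y -> I (x + y)) & (forall r x, I x -> I (r * x))].

Definition genI (A : R -> Prop) : R -> Prop :=
  fun x => forall J, is_ideal J -> subI A J -> J x.

Definition topI : R -> Prop := fun _ => True.

Definition prodI (I J : R -> Prop) : R -> Prop :=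
  genI (fun x => exists a b, [/\ I a, J b & x = a * b]).

Definition joinI (X : (R -> Prop) -> Prop) : R -> Prop :=
  genI (fun x => exists I, X I /\ I x).

Definition principal (a : R) : R -> Prop := genI (fun x => x = a).

Fixpoint powI (I : R -> Prop) (n : nat) : R -> Prop :=
  match n with 0%N => topI | n'.+1 => prodI I (powI I n') end.

(* propositional list membership (no decidable equality on predicates) *)
Fixpoint inS (I : R -> Prop) (s : seq (R -> Prop)) : Prop :=
  match s with [::] => False | J :: s' => J = I \/ inS I s' end.

Definition compactI (c : R -> Prop) : Prop :=
  is_ideal c /\
  forall X : (R -> Prop) -> Prop, (forall I, X I -> is_ideal I) ->
    subI c (joinI X) ->
    exists s : seq (R -> Prop), (forall I, inS I s -> X I) /\
      subI c (joinI (fun I => inS I s)).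

Definition lat_rad (a : R -> Prop) : R -> Prop :=
  joinI (fun x => compactI x /\ exists n, (0 < n)%N /\ subI (powI x n) a).

Definition lat_T_primary (T : (R -> Prop) -> Prop) (q : R -> Prop) : Prop :=
  [/\ is_ideal q, ~ (forall x, q x),
      (forall t, T t -> ~ subI t q) &
      exists t, T t /\
        forall c d, is_ideal c -> is_ideal d -> subI (prodI c d) q ->
          subI (prodI t c) q \/ subI (prodI t d) (lat_rad q)].

Definition mult_closed (S : R -> Prop) : Prop :=
  S 1 /\ forall a b, S a -> S b -> S (a * b).

Definition rad (Q : R -> Prop) : R -> Prop :=
  fun x => exists n, (0 < n)%N /\ Q (x ^+ n).

Definition S_primary (S Q : R -> Prop) : Prop :=
  [/\ is_ideal Q, ~ (forall x, Q x),
      (forall s, S s -> ~ Q s) &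
      exists s, S s /\ forall a b, Q (a * b) -> Q (s * a) \/ rad Q (s * b)].

Definition S_L (S : R -> Prop) : (R -> Prop) -> Prop :=
  fun t => exists a, S a /\ t = principal a.

End IdealLattice.

From Pilot Require Import Defs.
From mathcomp Require Import all_boot all_algebra.
From Stdlib Require Import Classical.
From mathcomp Require Import ring.
Set Implicit Arguments. Unset Strict Implicit. Unset Printing Implicit Defensive.
Import GRing.Theory.
Local Open Scope ring_scope.

(* Two facts make the ring and lattice notions match.  First, the lattice
   radical of an ideal is its usual radical: principal ideals are compact and
   (x)^n lies in (x^n), so x^n in Q puts x in a compact element some power of
   which is below Q; conversely every element of such a compact ideal has a
   power in Q.  Second, (s)c <= Q just says that s c lies in Q elementwise.
   Specialising the lattice condition to c = (a), d = (b) then gives the ring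
   condition; for the converse, if (s)c is not below Q pick a in c with s a
   outside Q: every b in d has a b in Q, hence s b in rad Q. *)

Section IdealLattice.
Variable R : comPzRingType.
Implicit Types (a b r s x y : R) (A B I J Q c d : R -> Prop).

Lemma ideal0 Q : is_ideal Q -> Q 0.
Proof. by case. Qed.

Lemma idealD Q : is_ideal Q -> forall x y, Q x -> Q y -> Q (x + y).
Proof. by case. Qed.

Lemma idealMl Q : is_ideal Q -> forall r x, Q x -> Q (r * x).
Proof. by case. Qed.

Lemma idealMr Q : is_ideal Q -> forall r x, Q x -> Q (x * r).
Proof. by move=> HQ r x Qx; rewrite mulrC; apply: idealMl. Qed.

Lemma genI_ideal A : is_ideal (genI A).
Proof.
split=> [J [] //|x y Hx Hy J HJ HA|r x Hx J HJ HA].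
- exact: idealD HJ _ _ (Hx J HJ HA) (Hy J HJ HA).
- exact: idealMl HJ _ _ (Hx J HJ HA).
Qed.

Lemma genI_min A J : is_ideal J -> subI A J -> subI (genI A) J.
Proof. by move=> HJ HA x; apply. Qed.

Lemma genI_sub A : subI A (genI A).
Proof. by move=> x Ax J _; apply. Qed.

Lemma genIS A B : subI A B -> subI (genI A) (genI B).
Proof.
by move=> AB; apply: genI_min (genI_ideal B) _ => x /AB; apply: genI_sub.
Qed.

Lemma principalP a y : principal a y <-> exists r, y = r * a.
Proof.
split=> [Hy|[r ->] J HJ HA]; last by apply: (idealMl HJ); apply: HA.
apply: (Hy (fun y => exists r, y = r * a)) => [|x ->].
  2: by exists 1; rewrite mul1r.
split=> [|x z [r1 ->] [r2 ->]|r x [r1 ->]].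
- by exists 0; rewrite mul0r.
- by exists (r1 + r2); rewrite mulrDl.
- by exists (r * r1); rewrite mulrA.
Qed.

Lemma principal_ideal a : is_ideal (principal a).
Proof. exact: genI_ideal. Qed.

Lemma principal_self a : principal a a.
Proof. by apply/principalP; exists 1; rewrite mul1r. Qed.

Lemma principal_subI Q a : is_ideal Q -> subI (principal a) Q <-> Q a.
Proof.
move=> HQ; split=> [|Qa y /principalP [r ->]]; last exact: idealMl.
by apply; apply: principal_self.
Qed.

Lemma prodI_mul I J a b : I a -> J b -> prodI I J (a * b).
Proof. by move=> Ia Jb; apply: genI_sub; exists a, b. Qed.

Lemma prodI_min I J Q :
  is_ideal Q -> (forall a b, I a -> J b -> Q (a * b)) -> subI (prodI I J) Q.
Proof. by move=> HQ H; apply: genI_min => // x [a [b [Ia Jb ->]]]; apply: H. Qed.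

Lemma prodI_principal_subI Q s I :
  is_ideal Q -> subI (prodI (principal s) I) Q <-> forall x, I x -> Q (s * x).
Proof.
move=> HQ; split=> [H x Ix|H].
  by apply: H; apply: prodI_mul Ix; apply: principal_self.
apply: prodI_min => // _ x /principalP [r ->] Ix.
by rewrite -mulrA; apply: (idealMl HQ); apply: H.
Qed.

Lemma prodI_principals_subI Q a b :
  is_ideal Q -> subI (prodI (principal a) (principal b)) Q <-> Q (a * b).
Proof.
move=> HQ; rewrite prodI_principal_subI //; split=> [|Qab _ /principalP [r ->]].
  by apply; apply: principal_self.
by rewrite mulrCA; apply: idealMl.
Qed.

Lemma ideal_expr_le Q x m n :
  is_ideal Q -> Q (x ^+ m) -> (m <= n)%N -> Q (x ^+ n).
Proof. by move=> HQ Qxm /subnK <-; rewrite exprD; apply: idealMl. Qed.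

Lemma rad_ideal Q : is_ideal Q -> is_ideal (Defs.rad Q).
Proof.
move=> HQ; split.
- by exists 1%N; rewrite expr1; split; last exact: ideal0.
- move=> x y [m [m0 Qxm]] [k [k0 Qyk]].
  exists (m + k)%N; split; first by rewrite addn_gt0 m0.
  rewrite exprDn; apply: (bigop.big_ind Q (ideal0 HQ) (idealD HQ)) => i _.
  rewrite -mulr_natl; apply: (idealMl HQ).
  have [ki|ik] := leqP k i.
    by apply: (idealMl HQ); exact: ideal_expr_le HQ Qyk ki.
  apply: (idealMr HQ); apply: ideal_expr_le HQ Qxm _.
  by rewrite -addnBA ?leq_addr // ltnW.
- move=> r x [n [n0 Qxn]]; exists n.
  by split=> //; rewrite exprMn; apply: idealMl.
Qed.

Lemma powI_expr I x n : I x -> powI I n (x ^+ n).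
Proof. by move=> Ix; elim: n => [|n IH] //=; rewrite exprS; apply: prodI_mul. Qed.

Lemma powI_principal x n : subI (powI (principal x) n) (principal (x ^+ n)).
Proof.
elim: n => [y _|n IH] /=; first by apply/principalP; exists y; rewrite mulr1.
apply: prodI_min; first exact: principal_ideal.
move=> _ _ /principalP [r ->] /IH /principalP [r' ->].
by apply/principalP; exists (r * r'); rewrite exprS; ring.
Qed.

Lemma inS_cat I (s1 s2 : seq (R -> Prop)) :
  inS I (s1 ++ s2) <-> inS I s1 \/ inS I s2.
Proof. by elim: s1 => /= [|J s ->]; tauto. Qed.

Lemma principal_compact x : compactI (principal x).
Proof.
split=> [|X _ Hx]; first exact: principal_ideal.
pose finitely_covered y := exists s : seq (R -> Prop),
  (forall I, inS I s -> X I) /\ joinI (fun I => inS I s) y.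
have covered_ideal : is_ideal finitely_covered.
  split=> [|y z [s1 [X1 y1]] [s2 [X2 z2]]|r y [s [Xs ys]]].
  - by exists [::]; split=> //; apply: ideal0 (genI_ideal _).
  - exists (s1 ++ s2); split=> [I /inS_cat [/X1|/X2] //|].
    apply: (idealD (genI_ideal _)).
    + by apply: genIS y1 => w [I [I1 Iw]]; exists I; rewrite inS_cat; auto.
    + by apply: genIS z2 => w [I [I2 Iw]]; exists I; rewrite inS_cat; auto.
  - by exists s; split=> //; exact: idealMl (genI_ideal _) _ _ ys.
have join_covered : subI (joinI X) finitely_covered.
  apply: genI_min covered_ideal _ => y [I [XI Iy]].
  exists [:: I]; split=> [I' /= [<-|] //|].
  by apply: genI_sub; exists I; split=> //; left.
have [s [Xs xs]] := join_covered x (Hx x (@principal_self x)).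
by exists s; split=> //; apply/(principal_subI _ (genI_ideal _)).
Qed.

Lemma lat_radE Q x : is_ideal Q -> lat_rad Q x <-> Defs.rad Q x.
Proof.
move=> HQ; split.
- apply: genI_min x; first exact: rad_ideal.
  move=> y [I [[_ [n [n0 InQ]]] Iy]]; exists n; split=> //.
  by apply: InQ; apply: powI_expr.
- move=> [n [n0 Qxn]]; apply: genI_sub; exists (principal x).
  split; last exact: principal_self.
  split; first exact: principal_compact.
  exists n; split=> // y /powI_principal /principalP [r ->]; exact: idealMl.
Qed.

Lemma S_L_avoids S Q :
  is_ideal Q -> (forall t, S_L S t -> ~ subI t Q) <-> (forall s, S s -> ~ Q s).
Proof.
move=> HQ; split=> [H s Ss Qs|H _ [s [Ss ->]]].
- by apply: (H (principal s)); [exists s | apply/(principal_subI _ HQ)].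
- by rewrite principal_subI //; apply: H.
Qed.

Lemma lat_primary_principal Q s : is_ideal Q ->
  (forall c d, is_ideal c -> is_ideal d -> subI (prodI c d) Q ->
     subI (prodI (principal s) c) Q \/ subI (prodI (principal s) d) (lat_rad Q))
  <-> (forall a b, Q (a * b) -> Q (s * a) \/ Defs.rad Q (s * b)).
Proof.
move=> HQ; have HrQ : is_ideal (lat_rad Q) by apply: genI_ideal.
split=> [H a b Qab | H c d _ _ cdQ].
- have abQ : subI (prodI (principal a) (principal b)) Q.
    exact/(prodI_principals_subI _ _ HQ).
  case: (H _ _ (principal_ideal a) (principal_ideal b) abQ).
  + by rewrite prodI_principal_subI // => sQ; left; apply: sQ; apply: principal_self.
  + rewrite prodI_principal_subI // => sradQ; right.
    by apply/(lat_radE _ HQ); apply: sradQ; apply: principal_self.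
- rewrite !prodI_principal_subI //.
  case: (classic (forall a, c a -> Q (s * a))) => [scQ|nscQ]; [by left | right].
  have [a not_saQ] := not_all_ex_not _ _ nscQ.
  have [ca _] := imply_to_and _ _ not_saQ.
  move=> b db; apply/(lat_radE _ HQ).
  by case: (H a b (cdQ _ (prodI_mul ca db))).
Qed.

End IdealLattice.

Theorem mainTheorem5 (R : comPzRingType) (S : R -> Prop) (hS : mult_closed S)
    (Q : R -> Prop) (hQ : is_ideal Q) :
  S_primary S Q <-> lat_T_primary (S_L S) Q.
Proof.
split.
- case=> _ Qproper avoids [s [Ss Hs]]; split=> //.
  + exact/(S_L_avoids S hQ).
  + exists (principal s); split; first by exists s.
    exact/(lat_primary_principal s hQ).
- case=> _ Qproper avoids [_ [[s [Ss ->]] Hs]]; split=> //.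
  + exact/(S_L_avoids S hQ).
  + by exists s; split=> //; apply/(lat_primary_principal s hQ).
Qed.
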